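(* Let $\langle E,\rightarrow\rangle$ be a computation and $b$ a regular predicate. The graph $S_b(E)$ has the same set of consistent cuts as the slice of $\langle E,\rightarrow\rangle$ with respect to $b$.
   Context: A computation is a directed graph $\langle E, \rightarrow\rangle$ whose vertices (events) are partitioned among processes $p_1,\dots,p_n$; events on each process are totally ordered, each process $p_i$ has an initial event $\bot_i$ (first) and final event $\top_i$ (last), the path relation contains Lamport's happened-before relation, all initial events lie in one strongly connected component and all final events in one strongly connected component. $\top$ is the set of final events and $\mathrm{succ}(e)$ the successor of $e$ on its process. A subset $C$ of the vertices of a directed graph is a consistent cut if for every edge $(u,v)$, $v\in C$ implies $u\in C$; $\emptyset,E$ are trivial. A predicate (evaluated on non-trivial consistent cuts) is regular if whenever consistent cuts $C_1,C_2$ satisfy it, so do $C_1\cap C_2$ and $C_1\cup C_2$. $J_b(e)$ is the least consistent cut of $\langle E,\rightarrow\rangle$ that satisfies $b$ and contains $e$, or $E$ if none exists or $e\in\top$. $F_b(e)[i]$ is the earliest event $g$ on $p_i$ with $J_b(e)\subseteq J_b(g)$. $S_b(E)$ has vertex set $E$ and edges from each $e\notin\top$ to $\mathrm{succ}(e)$ and from each $e$ to $F_b(e)[i]$ for every $i$. The slice of $\langle E,\rightarrow\rangle$ with respect to $b$ is a directed graph on $E$ whose consistent cuts include every consistent cut of $\langle E,\rightarrow\rangle$ satisfying $b$ and which has the fewest consistent cuts among all such graphs. *)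

From mathcomp Require Import all_boot.

Set Implicit Arguments.
Unset Strict Implicit.
Unset Printing Implicit Defensive.

(* Raw data of a computation: a finite set of events [ev], a directed graph
   [edge] on it, the messages [msg] of the underlying distributed computation
   (used only to define Lamport's happened-before), the process [proc e] of each
   event and, for each process, the sequence [procseq i] of its events in
   process order. *)
Record computation := Computation {
  ev : finType;
  nproc : nat;
  edge : rel ev;
  msg : rel ev;
  proc : ev -> 'I_nproc;
  procseq : 'I_nproc -> seq ev }.
Arguments edge : clear implicits.
Arguments msg : clear implicits.
Arguments proc : clear implicits.
Arguments procseq : clear implicits.
Arguments nproc : clear implicits.

Section Slicing.
Variable G : computation.
Local Notation T := (ev G).

Definition pos (e : T) : nat := index e (procseq G (proc G e)).
Definition is_init (e : T) : bool := pos e == 0.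
Definition is_final (e : T) : bool := pos e == (size (procseq G (proc G e))).-1.
Definition top : {set T} := [set e | is_final e].
Definition succ (e : T) : T := nth e (procseq G (proc G e)) (pos e).+1.
Definition proc_step (e f : T) : bool := ~~ is_final e && (f == succ e).

Definition tpath (r : rel T) (x y : T) : bool := [exists z, r x z && connect r z y].
Definition happened_before : rel T :=
  tpath (fun x y => proc_step x y || msg G x y).

Definition is_computation : Prop :=
  [/\ (forall i, uniq (procseq G i) /\ procseq G i != [::]),
      (forall e i, (e \in procseq G i) = (proc G e == i)),
      (forall e f, happened_before e f -> connect (edge G) e f),
      (forall e f, is_init e -> is_init f -> connect (edge G) e f) &
      (forall e f, is_final e -> is_final f -> connect (edge G) e f)].

Definition consistent (r : rel T) (C : {set T}) : bool :=
  [forall u, forall v, r u v ==> (v \in C) ==> (u \in C)].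
Definition cuts (r : rel T) : {set {set T}} := [set C | consistent r C].

Variable b : {set T} -> bool.

Definition sat (C : {set T}) : bool :=
  [&& consistent (edge G) C, C != set0, C != setT & b C].

Definition regular : Prop :=
  forall C1 C2, sat C1 -> sat C2 -> sat (C1 :&: C2) /\ sat (C1 :|: C2).

Definition J (e : T) : {set T} :=
  if is_final e then setT
  else odflt setT [pick C | [&& sat C, e \in C &
                    [forall D, (sat D && (e \in D)) ==> (C \subset D)]]].

Definition F (e : T) (i : 'I_(nproc G)) : T :=
  nth e (procseq G i) (find (fun g => J e \subset J g) (procseq G i)).

Definition S_edge : rel T :=
  fun u v => proc_step u v || [exists i, v == F u i].

Definition covers_sat (r : rel T) : Prop := forall C, sat C -> consistent r C.

Definition is_slice (r : rel T) : Prop :=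
  covers_sat r /\ (forall r', covers_sat r' -> #|cuts r| <= #|cuts r'|).

End Slicing.

(* Regularity makes the cuts satisfying b closed under intersection, so J_b(e)
   is the least satisfying cut containing e, and closed under union, so every
   union of such J_b(e) satisfies b.  A cut C of S_b(E) is downward closed for
   the preorder J_b(f) ⊆ J_b(g): if g ∈ C lies on process i, process order
   puts F_b(f)[i], which precedes g, in C, and the edge f → F_b(f)[i] then
   puts f in C.  Hence a non-trivial cut of S_b(E) is the union of the J_b(g),
   g ∈ C, and satisfies b; conversely every satisfying cut is a cut of S_b(E).
   So S_b(E) covers the satisfying cuts with no other non-trivial cuts: a slice
   has at least these cuts and, by minimality, at most as many. *)
From mathcomp Require Import all_boot.

Set Implicit Arguments.
Unset Strict Implicit.
Unset Printing Implicit Defensive.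

Section Consistency.
Variable G : computation.
Local Notation T := (ev G).
Implicit Types (r : rel T) (C : {set T}).

Lemma consistentP r C :
  reflect (forall u v, r u v -> v \in C -> u \in C) (consistent r C).
Proof.
apply: (iffP forallP) => [H u v | H u].
  by move=> ruv vC; move/forallP/(_ v): (H u); rewrite ruv vC.
by apply/forallP => v; apply/implyP => /H ruv; apply/implyP.
Qed.

Lemma consistent0 r : consistent r set0.
Proof. by apply/consistentP => u v _; rewrite inE. Qed.

Lemma consistentT r : consistent r setT.
Proof. by apply/consistentP => u v _ _; rewrite inE. Qed.

Lemma consistent_connect r C u v :
  consistent r C -> connect r u v -> v \in C -> u \in C.
Proof.
move=> /consistentP cC /connectP [p + ->].
elim: p u => [|w p IH] u //= /andP[ruw pw] /(IH w pw).
exact: cC.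
Qed.

Lemma sub_consistent r r' C :
  subrel r (connect r') -> consistent r' C -> consistent r C.
Proof.
move=> sub cC; apply/consistentP => u v /sub.
exact: consistent_connect.
Qed.

End Consistency.

Section Computation.
Variable G : computation.
Hypothesis compG : is_computation G.
Local Notation T := (ev G).
Implicit Types (C D : {set T}) (e f g : T).

Lemma mem_procseq e : e \in procseq G (proc G e).
Proof. by case: compG => _ mem_ps _ _ _; rewrite mem_ps. Qed.

Lemma proc_nth j k x0 :
  k < size (procseq G j) -> proc G (nth x0 (procseq G j) k) = j.
Proof. by case: compG => _ mem_ps _ _ _ hk; apply/eqP; rewrite -mem_ps mem_nth. Qed.

Lemma pos_nth j k x0 :
  k < size (procseq G j) -> pos (nth x0 (procseq G j) k) = k.
Proof.
move=> hk; rewrite /pos proc_nth //; apply: index_uniq => //.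
by case: compG => /(_ j) [].
Qed.

Lemma proc_step_nth j k x0 : k.+1 < size (procseq G j) ->
  proc_step (nth x0 (procseq G j) k) (nth x0 (procseq G j) k.+1).
Proof.
move=> hk; have hk' := ltnW hk.
rewrite /proc_step /is_final /succ pos_nth // proc_nth // (set_nth_default x0) //.
rewrite eqxx andbT; apply: contraTneq hk => ->.
by rewrite prednK ?ltnn // (leq_ltn_trans _ hk').
Qed.

Lemma consistent_procseq C j x0 k l :
  consistent (@proc_step G) C -> k <= l -> l < size (procseq G j) ->
  nth x0 (procseq G j) l \in C -> nth x0 (procseq G j) k \in C.
Proof.
move=> /consistentP cC; elim: l => [|l IH]; first by rewrite leqn0 => /eqP ->.
rewrite leq_eqVlt => /predU1P [-> // | hkl] hl hlC.
exact: IH hkl (ltnW hl) (cC _ _ (proc_step_nth x0 hl) hlC).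
Qed.

Lemma proc_step_connect : subrel (@proc_step G) (connect (edge G)).
Proof.
case: compG => _ _ hb _ _ e f step; apply: hb.
by apply/existsP; exists f; rewrite step connect0.
Qed.

Lemma consistent_final C g :
  consistent (edge G) C -> is_final g -> g \in C -> C = setT.
Proof.
move=> cC fin_g gC; apply/setP => e; rewrite inE.
set s := procseq G (proc G e).
have es : e \in s := mem_procseq e.
have s_gt0 : 0 < size s by case: s es.
have last_lt : (size s).-1 < size s by rewrite prednK.
have last_final : is_final (nth e s (size s).-1) by rewrite /is_final pos_nth // proc_nth.
have last_C : nth e s (size s).-1 \in C.
  by case: compG => _ _ _ _ finals; apply: consistent_connect cC (finals _ _ _ fin_g) gC.
rewrite -(nth_index e es); apply: consistent_procseq last_lt last_C.
  exact: sub_consistent proc_step_connect cC.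
by rewrite -ltnS prednK // index_mem.
Qed.

Variable b : {set T} -> bool.
Hypothesis regb : regular b.

Lemma sat_final C g : sat b C -> is_final g -> g \notin C.
Proof.
case/and4P=> cC _ /eqP nT _ fin_g; apply/negP => gC.
exact: nT (consistent_final cC fin_g gC).
Qed.

Lemma least_sat e D0 : sat b D0 -> e \in D0 ->
  exists C, [&& sat b C, e \in C & [forall D, (sat b D && (e \in D)) ==> (C \subset D)]].
Proof.
move=> sD0 eD0.
have [|C /andP[sC eC] Cmin] := @arg_minnP _ D0 (fun D => sat b D && (e \in D))
                                         (fun D => #|D|); first by rewrite sD0.
exists C; rewrite sC eC; apply/forallP => D; apply/implyP => /andP[sD eD].
have [sCD _] := regb sC sD.
have /Cmin CD_ge : sat b (C :&: D) && (e \in C :&: D) by rewrite sCD inE eC.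
by apply/setIidPl/eqP; rewrite eqEcard subsetIl.
Qed.

Lemma J_min e D : sat b D -> e \in D -> J b e \subset D.
Proof.
move=> sD eD; rewrite /J; case: ifP => [fin_e | _].
  by move/negP: (sat_final sD fin_e).
case: pickP => [C /and3P[_ _ /forallP Cmin] | none] /=.
  by apply: (implyP (Cmin D)); rewrite sD eD.
by have [C] := least_sat sD eD; rewrite none.
Qed.

Lemma J_cases e : J b e = setT \/ sat b (J b e) /\ e \in J b e.
Proof.
rewrite /J; case: is_final; first by left.
by case: pickP => [C /and3P[sC eC _] | _]; [right | left].
Qed.

Lemma mem_J e : e \in J b e.
Proof. by case: (J_cases e) => [-> | []]; rewrite ?inE. Qed.

Lemma proc_step_connect_S : subrel (@proc_step G) (connect (S_edge b)).
Proof. by move=> e f step; apply: connect1; rewrite /S_edge step. Qed.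

Lemma consistent_S_J C f g :
  consistent (S_edge b) C -> g \in C -> J b f \subset J b g -> f \in C.
Proof.
move=> cC gC Jfg.
set j := proc G g; set s := procseq G j.
set P := fun x => J b f \subset J b x.
have gs : g \in s := mem_procseq g.
have first_le : find P s <= index g s.
  by rewrite leqNgt; apply/negP => /(before_find g); rewrite nth_index // /P Jfg.
have Ff_C : F b f j \in C.
  rewrite /F -/s; apply: consistent_procseq first_le _ _; rewrite ?nth_index ?index_mem //.
  exact: sub_consistent proc_step_connect_S cC.
apply: (consistentP _ _ cC) Ff_C.
by apply/orP; right; apply/existsP; exists j.
Qed.

Lemma sat_consistent_S C : sat b C -> consistent (S_edge b) C.
Proof.
move=> sC; have cC : consistent (edge G) C by case/and4P: sC.
apply/consistentP => u v /orP[step | /existsP[i /eqP ->]] vC.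
  exact: consistent_connect cC (proc_step_connect step) vC.
move: vC; rewrite /F; set s := procseq G i; set P := fun g => J b u \subset J b g.
case: (ltnP (find P s) (size s)) => [found vC | ?]; last by rewrite nth_default.
have Ju_v : P (nth u s (find P s)) by apply: nth_find; rewrite has_find.
exact: subsetP (subset_trans Ju_v (J_min sC vC)) u (mem_J u).
Qed.

Lemma sat_bigcup (s : seq T) (A : T -> {set T}) :
  s != [::] -> {in s, forall g, sat b (A g)} -> sat b (\bigcup_(g <- s) A g).
Proof.
elim: s => [// | x s IH] _ sA; rewrite big_cons.
have [-> | s_nil] := eqVneq s [::]; first by rewrite big_nil setU0 sA ?mem_head.
have sAs : {in s, forall g, sat b (A g)} by move=> g gs; rewrite sA // inE gs orbT.
by case: (regb (sA x (mem_head x s)) (IH s_nil sAs)).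
Qed.

Lemma consistent_S_sat C :
  consistent (S_edge b) C -> C != set0 -> C != setT -> sat b C.
Proof.
move=> cC n0 /eqP nT.
have J_C g : g \in C -> sat b (J b g) /\ J b g \subset C.
  move=> gC; have [JT | [sJ _]] := J_cases g.
    by case: nT; apply/setP => f; rewrite inE (consistent_S_J cC gC) // JT subsetT.
  by split => //; apply/subsetP => f /(J_min sJ) /(consistent_S_J cC gC).
have -> : C = \bigcup_(g <- enum C) J b g.
  apply/setP => y; rewrite big_enum; apply/idP/bigcupP => [yC | [g gC]].
    by exists y => //; apply: mem_J.
  by apply/subsetP; case: (J_C g gC).
apply: sat_bigcup => [| g]; last by rewrite mem_enum => /J_C [].
by rewrite -size_eq0 -cardE -lt0n card_gt0.
Qed.

Lemma cuts_S_edge :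
  cuts (S_edge b) = [set C | [|| C == set0, C == setT | sat b C]].
Proof.
apply/setP => C; rewrite !inE; apply/idP/idP => [cC | ].
  have [// | n0] := eqVneq C set0; have [// | nT] := eqVneq C setT.
  by rewrite consistent_S_sat.
by case/or3P => [/eqP -> | /eqP -> | /sat_consistent_S //]; rewrite ?consistent0 ?consistentT.
Qed.

End Computation.

Theorem theorem9 (G : computation) (b : {set ev G} -> bool) :
  is_computation G -> regular b ->
  forall r : rel (ev G), is_slice b r -> cuts (S_edge b) = cuts r.
Proof.
move=> compG regb r [r_covers r_min].
have S_covers : covers_sat b (S_edge b) by move=> C; apply: sat_consistent_S.
have S_sub_r : cuts (S_edge b) \subset cuts r.
  apply/subsetP => C; rewrite cuts_S_edge // !inE.
  by case/or3P => [/eqP -> | /eqP -> | /r_covers //]; rewrite ?consistent0 ?consistentT.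
by apply/eqP; rewrite eqEcard S_sub_r r_min.
Qed.
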